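(* $\widehat{R}_{4/4,5}=-x^*\approx 3.743299247$, where $x^*$ is the smallest real root of \[ x^{12}+12x^{11}+48x^{10}-32x^9-864x^8-2016x^7+2784x^6+13248x^5-9072x^4-35136x^3+44928x^2-20736x+3456=0. \] (The class $\widehat{\Pi}_{4/4,5}$ consists of exactly four functions of the form $\frac{a_4z^4+a_3z^3+a_2z^2+a_1z+1}{(1-az)^4}$, with $a$ ranging over the four real roots of $120a^4-240a^3+120a^2-20a+1=0$; the value $-x^*$ is attained when $a$ is the smallest of these roots.)
   Context: A real rational function $\psi$ is always considered in lowest terms, as a smooth function on $\mathbb{R}$ minus its finitely many poles. It is absolutely monotonic at $x\in\mathbb{R}$ if $x$ is not a pole and $\psi^{(k)}(x)\ge 0$ for all integers $k\ge 0$. The radius of absolute monotonicity is $R(\psi)=\sup\big(\{r\in[0,\infty): \psi \text{ is absolutely monotonic at each point of } [-r,0]\}\cup\{0\}\big)\in[0,+\infty]$. $\widehat{\Pi}_{s/s,p}$ denotes the set of real rational functions $\psi(z)=P(z)/(1-az)^s$ with $P$ a real polynomial of degree at most $s$ and $a\in\mathbb{R}$, such that $\psi(z)-e^z=O(z^{p+1})$ as $z\to0$. Finally, $\widehat{R}_{s/s,p}=\sup\{R(\psi):\psi\in\widehat{\Pi}_{s/s,p}\}$. *)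

From Stdlib Require Import Reals Lra.
Open Scope R_scope.

Definition poly_eval (c : nat -> R) (s : nat) (z : R) : R :=
  sum_f_R0 (fun i => c i * z ^ i) s.

(* The rational function psi = N / Dn (N, Dn arbitrary real functions; used with
   polynomials).  psi, taken in lowest terms, is absolutely monotonic at x iff
   x is not a pole and all derivatives of psi at x are >= 0.  "x not a pole" is
   expressed by: near x, psi coincides (off the zeros of Dn) with a function
   having derivatives of all orders on a neighbourhood of x; F k is the k-th
   derivative.  This is exactly the lowest-terms function (removable
   singularities are filled in; genuine poles are excluded). *)
Definition abs_mono_at (N Dn : R -> R) (x : R) : Prop :=
  exists delta : R, 0 < delta /\
  exists F : nat -> R -> R,
    (forall y, Rabs (y - x) < delta -> Dn y <> 0 -> F 0%nat y = N y / Dn y) /\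
    (forall (k : nat) y, Rabs (y - x) < delta ->
        derivable_pt_lim (F k) y (F (S k) y)) /\
    (forall k : nat, 0 <= F k x).

Definition abs_mono_on (N Dn : R -> R) (r : R) : Prop :=
  forall x, -r <= x <= 0 -> abs_mono_at N Dn x.

Definition in_Pihat (s p : nat) (c : nat -> R) (a : R) : Prop :=
  exists C eta : R, 0 < eta /\
    forall z, Rabs z < eta -> 1 - a * z <> 0 ->
      Rabs (poly_eval c s z / (1 - a * z) ^ s - exp z) <= C * Rabs z ^ (S p).

(* The set whose supremum is \hat R_{s/s,p}:
   {0} union { r >= 0 | some psi in \hat Pi_{s/s,p} is abs. monotonic on [-r,0] }.
   Since sup_psi sup_r = sup of the union, \hat R_{s/s,p} = sup of this set. *)
Definition Rhat_set (s p : nat) (r : R) : Prop :=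
  r = 0 \/
  (0 <= r /\ exists (c : nat -> R) (a : R),
      in_Pihat s p c a /\
      abs_mono_on (poly_eval c s) (fun z => (1 - a * z) ^ s) r).

Definition q12 (x : R) : R :=
  x^12 + 12*x^11 + 48*x^10 - 32*x^9 - 864*x^8 - 2016*x^7 + 2784*x^6
  + 13248*x^5 - 9072*x^4 - 35136*x^3 + 44928*x^2 - 20736*x + 3456.

From Stdlib Require Import Reals QArith Qreals List Lra Lia Factorial.
From Coquelicot Require Import Coquelicot.
Import ListNotations.
Open Scope R_scope.

(* Proof outline.
   - Membership: psi(z) = P(z)/(1 - a z)^4 lies in \hat Pi_{4/4,5} iff a is a
     root of order_cond(a) = 120a^4 - 240a^3 + 120a^2 - 20a + 1 and P is the
     numerator num_coef a; this follows by peeling off, one power of z at a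
     time, the defect P(z) - (1 - a z)^4 (1 + z + ... + z^5/5!) = O(z^6).
   - Derivatives: for such a, psi_a = B0 + sum_j B_j (1 - a z)^(-j), whose
     k-th derivative psi_deriv a k has a closed form: a positive factor times
     a cubic Tpoly in w = 1 - a z.  Absolute monotonicity at x is then
     exactly "psi_deriv a k x >= 0 for all k" (uniqueness of derivatives).
   - The four roots of order_cond lie in explicit intervals I1 < ... < I4.
     For a in I2, I4 (resp. I3) the 9th derivative is negative at 0 (resp.
     at -1), so the radius is < 1.  For a in I1, psi_a' = dnum a / w^5 with
     dnum a an increasing cubic vanishing at xs in [xL, xR], and every other
     derivative is nonnegative on [xL, 0]; hence the radius is exactly - xs.
   - Eliminating a between order_cond a = 0 and dnum a xs = 0 gives
     q12 xs = 0, and q12 has no root below xs.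
   All numerical sign conditions are proved by a small verified procedure
   certifying positivity of rational polynomials on rational intervals (Taylor
   shift and interval Horner bounds with bisection), run by vm_compute. *)

(** * Certified positivity of polynomials with rational coefficients *)

(* Horner evaluation of a coefficient list, constant coefficient first. *)
Fixpoint horner (l : list R) (x : R) : R :=
  match l with nil => 0 | c :: l' => c + x * horner l' x end.

Notation RP l := (map Q2R l).

Fixpoint padd (l m : list Q) : list Q :=
  match l, m with
  | nil, _ => m
  | _, nil => l
  | a :: l', b :: m' => Qred (a + b) :: padd l' m'
  end.

Fixpoint pscale (c : Q) (l : list Q) : list Q :=
  match l with nil => nil | a :: l' => Qred (c * a) :: pscale c l' end.

Fixpoint ptaylor (c : Q) (l : list Q) : list Q :=
  match l with
  | nil => nil
  | a :: l' => let s := ptaylor c l' in padd [a] (padd (pscale c s) (0%Q :: s))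
  end.

Fixpoint preflect (l : list Q) : list Q :=
  match l with nil => nil | a :: l' => a :: map Qopp (preflect l') end.

Definition Qpos_b (q : Q) : bool := negb (Qle_bool q 0).

(* A lower bound of p on [0, d]: Horner's scheme where every partial value
   x * q(x) is replaced by min (0, d * q_low). *)
Fixpoint lower_bound (l : list Q) (d : Q) : Q :=
  match l with
  | nil => 0%Q
  | c :: l' => let m := Qred (d * lower_bound l' d) in
               Qred (c + (if Qle_bool 0 m then 0 else m))
  end.

Fixpoint pos_on (p : list Q) (l u : Q) (n : nat) : bool :=
  Qpos_b (lower_bound (ptaylor l p) (u - l)) ||
  match n with
  | O => false
  | S n' => let m := Qred ((l + u) / 2) in pos_on p l m n' && pos_on p m u n'
  end.

Fixpoint all_nonneg (l : list Q) : bool :=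
  match l with nil => true | a :: l' => Qle_bool 0 a && all_nonneg l' end.

Definition pos_from (p : list Q) (l : Q) : bool :=
  match ptaylor l p with nil => false | a :: r => Qpos_b a && all_nonneg r end.

Lemma Q2R_Qred q : Q2R (Qred q) = Q2R q.
Proof. apply Qeq_eqR, Qred_correct. Qed.

Lemma horner_padd l m x : horner (RP (padd l m)) x = horner (RP l) x + horner (RP m) x.
Proof.
  revert m; induction l as [|a l IH]; intros [|b m]; cbn [padd map horner]; try ring.
  rewrite Q2R_Qred, Q2R_plus, IH; ring.
Qed.

Lemma horner_pscale c l x : horner (RP (pscale c l)) x = Q2R c * horner (RP l) x.
Proof.
  induction l as [|a l IH]; cbn [pscale map horner]; try ring.
  rewrite Q2R_Qred, Q2R_mult, IH; ring.
Qed.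

Lemma horner_ptaylor c l t : horner (RP (ptaylor c l)) t = horner (RP l) (Q2R c + t).
Proof.
  induction l as [|a l IH]; [simpl; ring|].
  cbn [ptaylor]. rewrite !horner_padd, horner_pscale. simpl.
  rewrite RMicromega.Q2R_0, IH. ring.
Qed.

Lemma horner_preflect l t : horner (RP (preflect l)) t = horner (RP l) (- t).
Proof.
  assert (Hopp : forall m, horner (RP (map Qopp m)) t = - horner (RP m) t).
  { induction m as [|b m IHm]; simpl; try ring. rewrite Q2R_opp, IHm. ring. }
  induction l as [|a l IH]; simpl; try ring.
  rewrite Hopp, IH. ring.
Qed.

Lemma Qpos_b_sound q : Qpos_b q = true -> 0 < Q2R q.
Proof.
  unfold Qpos_b. destruct (Qle_bool q 0) eqn:E; simpl; try discriminate.
  intros _. apply Rnot_le_lt. intro H. rewrite <- RMicromega.Q2R_0 in H.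
  apply Rle_Qle, Qle_bool_iff in H. congruence.
Qed.

Lemma Qle_bool_sound a b : Qle_bool a b = true -> Q2R a <= Q2R b.
Proof. intro H. apply Qle_Rle, Qle_bool_iff, H. Qed.

Lemma Qle_bool_false a b : Qle_bool a b = false -> Q2R b < Q2R a.
Proof.
  intro H. apply Rnot_le_lt. intro H'. apply Rle_Qle, Qle_bool_iff in H'. congruence.
Qed.

Lemma lower_bound_sound l d t : 0 <= t <= Q2R d -> Q2R (lower_bound l d) <= horner (RP l) t.
Proof.
  intros [H0 H1]. induction l as [|c l IH]; cbn [lower_bound map horner].
  - rewrite RMicromega.Q2R_0; lra.
  - rewrite Q2R_Qred, Q2R_plus. apply Rplus_le_compat_l.
    set (L := lower_bound l d) in *.
    destruct (Qle_bool 0 (Qred (d * L))) eqn:E.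
    + apply Qle_bool_sound in E. rewrite RMicromega.Q2R_0, Q2R_Qred, Q2R_mult in E.
      rewrite RMicromega.Q2R_0.
      destruct (Rle_dec 0 (Q2R L)); [apply Rmult_le_pos; lra|].
      assert (t = 0 \/ 0 < t) as [-> | ht] by lra; [lra|].
      assert (0 < Q2R d * (- Q2R L)) by (apply Rmult_lt_0_compat; lra). lra.
    + apply Qle_bool_false in E. rewrite RMicromega.Q2R_0, Q2R_Qred, Q2R_mult in E.
      rewrite Q2R_Qred, Q2R_mult.
      assert (Q2R L < 0).
      { destruct (Rle_dec 0 (Q2R L)); [|lra].
        assert (0 <= Q2R d * Q2R L) by (apply Rmult_le_pos; lra). lra. }
      assert (0 <= (Q2R d - t) * (- Q2R L)) by (apply Rmult_le_pos; lra).
      apply Rle_trans with (t * Q2R L); [nra|]. apply Rmult_le_compat_l; lra.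
Qed.

Lemma pos_on_sound p l u n x : pos_on p l u n = true ->
  Q2R l <= x <= Q2R u -> 0 < horner (RP p) x.
Proof.
  revert l u. induction n as [|n IH]; intros l u H Hx; cbn [pos_on] in H.
  all: apply orb_true_iff in H; destruct H as [H|H].
  1,3: apply Qpos_b_sound in H;
       replace x with (Q2R l + (x - Q2R l)) by ring; rewrite <- horner_ptaylor;
       eapply Rlt_le_trans; [apply H|]; apply lower_bound_sound; rewrite Q2R_minus; lra.
  - discriminate.
  - apply andb_true_iff in H. destruct H as [H1 H2].
    destruct (Rle_dec x (Q2R (Qred ((l + u) / 2)))).
    + eapply IH; [apply H1|]. lra.
    + eapply IH; [apply H2|]. lra.
Qed.

Lemma all_nonneg_sound l t : all_nonneg l = true -> 0 <= t -> 0 <= horner (RP l) t.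
Proof.
  intros H Ht; induction l as [|a l IH]; simpl in *; [lra|].
  apply andb_true_iff in H; destruct H as [H1 H2]. apply Qle_bool_sound in H1.
  rewrite RMicromega.Q2R_0 in H1. specialize (IH H2).
  assert (0 <= t * horner (RP l) t) by (apply Rmult_le_pos; lra). lra.
Qed.

Lemma pos_from_sound p l x : pos_from p l = true -> Q2R l <= x -> 0 < horner (RP p) x.
Proof.
  unfold pos_from. intros H Hx.
  replace x with (Q2R l + (x - Q2R l)) by ring. rewrite <- horner_ptaylor.
  destruct (ptaylor l p) as [|a r]; [discriminate|].
  apply andb_true_iff in H; destruct H as [H1 H2]. apply Qpos_b_sound in H1. simpl.
  pose proof (all_nonneg_sound r (x - Q2R l) H2 ltac:(lra)).
  assert (0 <= (x - Q2R l) * horner (RP r) (x - Q2R l)) by (apply Rmult_le_pos; lra). lra.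
Qed.

Lemma pos_upto_sound p l x : pos_from (preflect p) (- l) = true -> x <= Q2R l ->
  0 < horner (RP p) x.
Proof.
  intros H Hx. replace x with (- - x) by ring. rewrite <- horner_preflect.
  apply (pos_from_sound _ _ _ H). rewrite Q2R_opp. lra.
Qed.

Ltac to_horner p x :=
  lazymatch goal with |- 0 < ?e =>
    replace e with (horner (RP p) x) by (cbv [horner map Q2R Qnum Qden]; field)
  end.

Ltac certify p l u n x :=
  to_horner p x; apply (pos_on_sound p l u n); [vm_compute; reflexivity|].

Ltac certify_from p l x :=
  to_horner p x; apply (pos_from_sound p l); [vm_compute; reflexivity|].

Ltac certify_upto p l x :=
  to_horner p x; apply (pos_upto_sound p l); [vm_compute; reflexivity|].

(** * Taylor polynomials of exp *)

Definition exp_taylor (n : nat) (z : R) : R :=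
  sum_f_R0 (fun k => z ^ k / INR (fact k)) n.

Lemma exp_taylor_at_0 n : exp_taylor n 0 = 1.
Proof.
  induction n as [|n IH]; unfold exp_taylor in *; [simpl; field|].
  cbn [sum_f_R0]. rewrite IH, pow_ne_zero by lia. unfold Rdiv. ring.
Qed.

Lemma monomial_deriv m z :
  derivable_pt_lim (fun z => z ^ S m / INR (fact (S m))) z (z ^ m / INR (fact m)).
Proof.
  assert (Hf : INR (fact m) <> 0) by apply INR_fact_neq_0.
  apply is_derive_Reals. auto_derive; auto.
  change (fact m + m * fact m)%nat with (fact (S m)). rewrite fact_simpl, mult_INR.
  replace (match m with 0%nat => 1 | S _ => INR m + 1 end) with (INR (S m))
    by (destruct m; [reflexivity | rewrite S_INR; reflexivity]).
  field. split; [auto | apply not_0_INR; lia].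
Qed.

Lemma exp_taylor_deriv n z : derivable_pt_lim (exp_taylor (S n)) z (exp_taylor n z).
Proof.
  induction n as [|n IH].
  - replace (exp_taylor 0 z) with (0 + z ^ 0 / INR (fact 0)) by (unfold exp_taylor; simpl; ring).
    apply (derivable_pt_lim_plus (fun _ => exp_taylor 0 0) _);
      [apply derivable_pt_lim_const | apply monomial_deriv].
  - apply (derivable_pt_lim_plus (exp_taylor (S n)) _); [exact IH | apply monomial_deriv].
Qed.

Lemma integrate_bound (f g : R -> R) (M : R) (n : nat) : 0 <= M ->
  f 0 = 0 -> (forall t, derivable_pt_lim f t (g t)) ->
  (forall t, Rabs t <= 1 -> Rabs (g t) <= M * Rabs t ^ n) ->
  forall z, Rabs z <= 1 -> Rabs (f z) <= M * Rabs z ^ (S n).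
Proof.
  intros HM H0 Hd Hg z Hz.
  destruct (MVT_abs f g 0 z (fun c _ => Hd c)) as [c [Hc1 Hc2]].
  rewrite H0, Rminus_0_r, Rminus_0_r in Hc1. rewrite Hc1.
  assert (Hcz : Rabs c <= Rabs z).
  { unfold Rmin, Rmax in Hc2. destruct (Rle_dec 0 z);
    unfold Rabs; destruct (Rcase_abs c); destruct (Rcase_abs z); lra. }
  assert (Hgc : Rabs (g c) <= M * Rabs z ^ n).
  { eapply Rle_trans; [apply Hg; lra|]. apply Rmult_le_compat_l; [lra|].
    apply pow_incr. split; [apply Rabs_pos | auto]. }
  simpl. rewrite (Rmult_comm (Rabs z)), <- Rmult_assoc.
  apply Rmult_le_compat_r; [apply Rabs_pos | auto].
Qed.

Lemma exp_taylor_bound n z : Rabs z <= 1 -> Rabs (exp z - exp_taylor n z) <= 3 * Rabs z ^ S n.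
Proof.
  revert z. induction n as [|n IH].
  - apply (integrate_bound (fun t => exp t - exp_taylor 0 t) exp); [lra | | |].
    + rewrite exp_taylor_at_0, exp_0. ring.
    + intro t. replace (exp t) with (exp t - 0) by ring.
      apply (derivable_pt_lim_minus exp (fun _ => exp_taylor 0 0));
        [apply derivable_pt_lim_exp | apply derivable_pt_lim_const].
    + intros t Ht. rewrite Rabs_right by (left; apply exp_pos). simpl. rewrite Rmult_1_r.
      apply Rle_trans with (exp 1); [|apply exp_le_3].
      destruct (Req_dec t 1) as [->|]; [lra|].
      left; apply exp_increasing. apply Rabs_le_between in Ht. lra.
  - apply (integrate_bound _ (fun t => exp t - exp_taylor n t)); [lra | | | exact IH].
    + rewrite exp_taylor_at_0, exp_0. ring.
    + intro t. apply derivable_pt_lim_minus; [apply derivable_pt_lim_exp | apply exp_taylor_deriv].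
Qed.

(** * The class \hat Pi_{4/4,5} *)

(* The order condition: psi_a can match exp to order 5 iff order_cond a = 0. *)
Definition order_cond (a : R) : R := 120*a^4 - 240*a^3 + 120*a^2 - 20*a + 1.

(* Numerator coefficients forced by matching 1, z, ..., z^4 with (1-az)^4 exp z. *)
Definition e1 (a : R) : R := 1 - 4*a.
Definition e2 (a : R) : R := 1/2 - 4*a + 6*a^2.
Definition e3 (a : R) : R := 1/6 - 2*a + 6*a^2 - 4*a^3.
Definition e4 (a : R) : R := 1/24 - 2/3*a + 3*a^2 - 4*a^3 + a^4.

Definition num_coef (a : R) (n : nat) : R :=
  match n with 0%nat => 1 | 1%nat => e1 a | 2%nat => e2 a | 3%nat => e3 a | _ => e4 a end.

(* Coefficients of z^6 .. z^9 in (1-az)^4 exp_taylor 5 z. *)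
Definition tail_coef (a z : R) : R :=
  (-1/30*a + 1/4*a^2 - 2/3*a^3 + 1/2*a^4)
  + z*((1/20*a^2 - 1/6*a^3 + 1/6*a^4) + z*((-1/30*a^3 + 1/24*a^4) + z*(1/120*a^4))).

Lemma poly_eval4 c y :
  poly_eval c 4 y = c 0%nat + c 1%nat * y + c 2%nat * y^2 + c 3%nat * y^3 + c 4%nat * y^4.
Proof. unfold poly_eval. simpl. ring. Qed.

Lemma exp_taylor_5 z : exp_taylor 5 z = 1 + z + z^2/2 + z^3/6 + z^4/24 + z^5/120.
Proof. unfold exp_taylor. simpl. field. Qed.

Lemma numerator_defect c a z : poly_eval c 4 z - (1 - a*z)^4 * exp_taylor 5 z =
  (c 0%nat - 1) + z*((c 1%nat - e1 a) + z*((c 2%nat - e2 a) + z*((c 3%nat - e3 a)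
   + z*((c 4%nat - e4 a) + z*(- order_cond a / 120 + z*(- tail_coef a z)))))).
Proof.
  rewrite poly_eval4, exp_taylor_5. unfold order_cond, e1, e2, e3, e4, tail_coef. field.
Qed.

Lemma small_multiple_zero (d K eta : R) : 0 < eta ->
  (forall z, 0 < z < eta -> Rabs d <= K * z) -> d = 0.
Proof.
  intros He H. destruct (Req_dec d 0) as [|Hd]; auto. exfalso.
  apply Rabs_pos_lt in Hd. pose proof (Rabs_pos K).
  set (z := Rmin (eta / 2) (Rabs d / (2 * (Rabs K + 1)))).
  assert (Hz : 0 < z) by (apply Rmin_pos; [lra | apply Rdiv_lt_0_compat; lra]).
  assert (Hz1 : z <= eta / 2) by apply Rmin_l.
  assert (Hz2 : z * (2 * (Rabs K + 1)) <= Rabs d).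
  { assert (z <= Rabs d / (2 * (Rabs K + 1))) by apply Rmin_r.
    apply Rmult_le_compat_r with (r := 2 * (Rabs K + 1)) in H1; [|lra].
    unfold Rdiv in H1. rewrite Rmult_assoc, Rinv_l, Rmult_1_r in H1; lra. }
  specialize (H z ltac:(lra)).
  assert (K * z <= Rabs K * z) by (apply Rmult_le_compat_r; [lra | apply Rle_abs]).
  nra.
Qed.

Lemma peel (d : R) (g : R -> R) (m : nat) (M eta : R) : 0 < eta ->
  (forall z, 0 < Rabs z < eta -> Rabs (d + z * g z) <= M * Rabs z ^ (S m)) ->
  (exists B, forall z, 0 < Rabs z < eta -> Rabs (g z) <= B) ->
  d = 0 /\ (forall z, 0 < Rabs z < eta -> Rabs (g z) <= M * Rabs z ^ m).
Proof.
  intros He HM [B HB].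
  assert (Hd : d = 0).
  { apply (small_multiple_zero d (Rabs M + B) (Rmin eta 1)); [apply Rmin_pos; lra|].
    intros z [Hz0 Hz1].
    assert (Hze : z < eta) by (eapply Rlt_le_trans; [apply Hz1 | apply Rmin_l]).
    assert (Hz1' : z < 1) by (eapply Rlt_le_trans; [apply Hz1 | apply Rmin_r]).
    assert (Haz : Rabs z = z) by (apply Rabs_right; lra).
    specialize (HB z ltac:(lra)). specialize (HM z ltac:(lra)). rewrite Haz in HM.
    assert (Hpow : z ^ S m <= z).
    { assert (z ^ m <= 1) by (rewrite <- (pow1 m); apply pow_incr; lra). simpl. nra. }
    assert (M * z ^ S m <= Rabs M * z).
    { apply Rle_trans with (Rabs M * z ^ S m).
      - apply Rmult_le_compat_r; [apply pow_le; lra | apply Rle_abs].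
      - apply Rmult_le_compat_l; [apply Rabs_pos | exact Hpow]. }
    assert (Rabs (z * g z) <= z * B) by (rewrite Rabs_mult, Haz; apply Rmult_le_compat_l; lra).
    assert (Rabs d <= Rabs (d + z * g z) + Rabs (z * g z)).
    { replace d with ((d + z * g z) + - (z * g z)) at 1 by ring.
      eapply Rle_trans; [apply Rabs_triang|]. rewrite Rabs_Ropp. lra. }
    lra. }
  split; [exact Hd|]. intros z Hz.
  specialize (HM z Hz). rewrite Hd, Rplus_0_l, Rabs_mult in HM. simpl in HM.
  apply Rmult_le_reg_r with (Rabs z); [lra|].
  replace (M * Rabs z ^ m * Rabs z) with (M * (Rabs z * Rabs z ^ m)) by ring.
  rewrite Rmult_comm. exact HM.
Qed.

Lemma nested_bound d g z B : Rabs z <= 1 -> Rabs g <= B -> Rabs (d + z * g) <= Rabs d + B.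
Proof.
  intros Hz Hg. eapply Rle_trans; [apply Rabs_triang|]. rewrite Rabs_mult.
  apply Rplus_le_compat_l. pose proof (Rabs_pos g). nra.
Qed.

Definition tail_bound (a : R) : R :=
  Rabs (-1/30*a + 1/4*a^2 - 2/3*a^3 + 1/2*a^4) + (Rabs (1/20*a^2 - 1/6*a^3 + 1/6*a^4)
  + (Rabs (-1/30*a^3 + 1/24*a^4) + Rabs (1/120*a^4))).

Lemma tail_coef_bound a z : Rabs z <= 1 -> Rabs (tail_coef a z) <= tail_bound a.
Proof.
  intros Hz. unfold tail_coef, tail_bound.
  do 3 (apply nested_bound; [exact Hz|]). lra.
Qed.

Lemma denominator_near_1 a z : Rabs z < 1 / (2 * (Rabs a + 1)) -> 1/2 < 1 - a*z < 3/2.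
Proof.
  intros Hz. pose proof (Rabs_pos a).
  assert (Rabs (a*z) < 1/2).
  { rewrite Rabs_mult. apply Rle_lt_trans with (Rabs a * (1 / (2 * (Rabs a + 1)))).
    - apply Rmult_le_compat_l; lra.
    - apply Rmult_lt_reg_r with (2 * (Rabs a + 1)); [lra|]. field_simplify; lra. }
  apply Rabs_def2 in H0. lra.
Qed.

Lemma pihat_defect c a : in_Pihat 4 5 c a ->
  exists M et, 0 < et <= 1 /\ forall z, 0 < Rabs z < et ->
    Rabs (poly_eval c 4 z - (1 - a*z)^4 * exp_taylor 5 z) <= M * Rabs z ^ 6.
Proof.
  intros [C [eta [Heta H]]].
  assert (Hpa : 0 < 1 / (2 * (Rabs a + 1)))
    by (pose proof (Rabs_pos a); apply Rdiv_lt_0_compat; lra).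
  exists (6 * Rabs C + 18), (Rmin eta (Rmin 1 (1 / (2 * (Rabs a + 1))))).
  split; [split; [repeat apply Rmin_pos; lra | eapply Rle_trans; [apply Rmin_r | apply Rmin_l]]|].
  intros z [Hz0 Hz].
  assert (Hz1 : Rabs z < eta) by (eapply Rlt_le_trans; [apply Hz | apply Rmin_l]).
  assert (Hz2 : Rabs z < 1)
    by (eapply Rlt_le_trans; [apply Hz | eapply Rle_trans; [apply Rmin_r | apply Rmin_l]]).
  assert (Hw : 1/2 < 1 - a*z < 3/2).
  { apply denominator_near_1.
    eapply Rlt_le_trans; [apply Hz | eapply Rle_trans; [apply Rmin_r | apply Rmin_r]]. }
  specialize (H z Hz1 ltac:(lra)). pose proof (exp_taylor_bound 5 z ltac:(lra)) as HT.
  set (w := 1 - a*z) in *.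
  assert (Hw4 : 0 < w^4 <= 6) by (split; [apply pow_lt; lra | apply Rle_trans with ((3/2)^4); [apply pow_incr | ]; lra]).
  replace (poly_eval c 4 z - w^4 * exp_taylor 5 z) with
    (w^4 * (poly_eval c 4 z / w^4 - exp z) + w^4 * (exp z - exp_taylor 5 z)) by (field; lra).
  eapply Rle_trans; [apply Rabs_triang|]. rewrite !Rabs_mult, (Rabs_right (w^4)) by lra.
  assert (Hz6 : 0 <= Rabs z ^ 6) by (apply pow_le, Rabs_pos).
  assert (C * Rabs z ^ 6 <= Rabs C * Rabs z ^ 6) by (apply Rmult_le_compat_r; [lra | apply Rle_abs]).
  assert (w^4 * Rabs (poly_eval c 4 z / w^4 - exp z) <= 6 * (Rabs C * Rabs z ^ 6))
    by (apply Rmult_le_compat; [lra | apply Rabs_pos | lra | lra]).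
  assert (w^4 * Rabs (exp z - exp_taylor 5 z) <= 6 * (3 * Rabs z ^ 6))
    by (apply Rmult_le_compat; [lra | apply Rabs_pos | lra | lra]).
  lra.
Qed.

(* Bounds the nested remainder g in a peeling step, for |z| <= 1. *)
Ltac bounded := eexists; intros ? ?; cbv beta; repeat (apply nested_bound; [auto|]); eauto.

Lemma pihat_coeffs c a : in_Pihat 4 5 c a ->
  order_cond a = 0 /\ forall z, poly_eval c 4 z = poly_eval (num_coef a) 4 z.
Proof.
  intros Hpi. destruct (pihat_defect c a Hpi) as [M [et [Het HD]]].
  setoid_rewrite numerator_defect in HD.
  assert (Hz1 : forall z, 0 < Rabs z < et -> Rabs z <= 1) by (intros; lra).
  assert (HT : forall z, 0 < Rabs z < et -> Rabs (- tail_coef a z) <= tail_bound a)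
    by (intros z Hz; rewrite Rabs_Ropp; apply tail_coef_bound; auto).
  destruct (peel _ _ 5 _ _ (proj1 Het) HD ltac:(bounded)) as [E0 G1].
  destruct (peel _ _ 4 _ _ (proj1 Het) G1 ltac:(bounded)) as [E1 G2].
  destruct (peel _ _ 3 _ _ (proj1 Het) G2 ltac:(bounded)) as [E2 G3].
  destruct (peel _ _ 2 _ _ (proj1 Het) G3 ltac:(bounded)) as [E3 G4].
  destruct (peel _ _ 1 _ _ (proj1 Het) G4 ltac:(bounded)) as [E4 G5].
  destruct (peel _ _ 0 _ _ (proj1 Het) G5 ltac:(bounded)) as [E5 _].
  split; [lra|]. intro z. rewrite !poly_eval4. simpl.
  rewrite (Rminus_diag_uniq _ _ E0), (Rminus_diag_uniq _ _ E1), (Rminus_diag_uniq _ _ E2),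
    (Rminus_diag_uniq _ _ E3), (Rminus_diag_uniq _ _ E4). reflexivity.
Qed.

Lemma pihat_of_root a : order_cond a = 0 -> in_Pihat 4 5 (num_coef a) a.
Proof.
  intros HQ.
  assert (Hpa : 0 < 1 / (2 * (Rabs a + 1)))
    by (pose proof (Rabs_pos a); apply Rdiv_lt_0_compat; lra).
  exists (16 * tail_bound a + 3), (Rmin 1 (1 / (2 * (Rabs a + 1)))).
  split; [apply Rmin_pos; lra|]. intros z Hz _.
  assert (Hz1 : Rabs z <= 1) by (left; eapply Rlt_le_trans; [apply Hz | apply Rmin_l]).
  assert (Hw : 1/2 < 1 - a*z < 3/2)
    by (apply denominator_near_1; eapply Rlt_le_trans; [apply Hz | apply Rmin_r]).
  assert (Hdef : poly_eval (num_coef a) 4 z - (1 - a*z)^4 * exp_taylor 5 z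
                 = z^6 * (- tail_coef a z))
    by (rewrite numerator_defect, HQ; simpl; field).
  pose proof (exp_taylor_bound 5 z Hz1) as HT.
  pose proof (tail_coef_bound a z Hz1) as HR.
  set (w := 1 - a*z) in *.
  assert (Hw4 : 1/16 <= w^4) by (replace (1/16) with ((1/2)^4) by field; apply pow_incr; lra).
  replace (poly_eval (num_coef a) 4 z / w^4 - exp z) with
    (z^6 * (- tail_coef a z) / w^4 - (exp z - exp_taylor 5 z))
    by (rewrite <- Hdef; field; lra).
  eapply Rle_trans; [apply Rabs_triang|]. rewrite Rabs_Ropp.
  assert (Rabs (z^6 * - tail_coef a z / w^4) <= 16 * tail_bound a * Rabs z ^ 6).
  { unfold Rdiv. rewrite !Rabs_mult, Rabs_Ropp, Rabs_inv, <- RPow_abs, (Rabs_right (w^4)) by lra.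
    assert (Hinv : 0 < / w^4 <= 16).
    { split; [apply Rinv_0_lt_compat; lra|].
      replace 16 with (/ (1/16)) by field. apply Rinv_le_contravar; lra. }
    pose proof (pow_le _ 6 (Rabs_pos z)). pose proof (Rabs_pos (tail_coef a z)).
    assert (Rabs z ^ 6 * Rabs (tail_coef a z) <= Rabs z ^ 6 * tail_bound a)
      by (apply Rmult_le_compat_l; lra).
    apply Rle_trans with (Rabs z ^ 6 * tail_bound a * 16); [|right; ring].
    apply Rmult_le_compat; [apply Rmult_le_pos; lra | lra | lra | lra]. }
  lra.
Qed.

(** * Derivatives of psi_a *)

Fixpoint rising (x : R) (k : nat) : R :=
  match k with O => 1 | S k' => rising x k' * (x + INR k') end.

Lemma rising_shift x k : rising x (S k) = x * rising (x + 1) k.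
Proof.
  induction k as [|k IH]; [simpl; ring|].
  change (rising x (S (S k))) with (rising x (S k) * (x + INR (S k))).
  rewrite IH, S_INR. simpl. ring.
Qed.

Lemma rising_pos x k : 0 < x -> 0 < rising x k.
Proof.
  intros Hx. induction k as [|k IH]; simpl; [lra|].
  apply Rmult_lt_0_compat; [exact IH | pose proof (pos_INR k); lra].
Qed.

(* k-th derivative of y |-> (1 - a y)^(-j). *)
Definition inv_pow_deriv (a : R) (j k : nat) (y : R) : R :=
  rising (INR j) k * a ^ k / (1 - a*y) ^ (j + k).

Lemma derivable_pt_lim_eq_value f y l l' :
  derivable_pt_lim f y l -> l = l' -> derivable_pt_lim f y l'.
Proof. intros H ->; exact H. Qed.

Lemma inv_pow_deriv_step a j k y : 1 - a*y <> 0 ->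
  derivable_pt_lim (inv_pow_deriv a j k) y (inv_pow_deriv a j (S k) y).
Proof.
  intros Hw. unfold inv_pow_deriv.
  apply is_derive_Reals. auto_derive; [apply pow_nonzero; auto|].
  rewrite Nat.add_succ_r. simpl rising.
  destruct (j + k)%nat as [|n] eqn:E.
  - assert (j = 0 /\ k = 0)%nat as [-> ->] by lia. simpl. field. auto.
  - assert ((1 - a*y) ^ n <> 0) by (apply pow_nonzero; auto).
    simpl pow. simpl Init.Nat.pred. rewrite <- E, plus_INR.
    replace (1 + - (a*y)) with (1 - a*y) by ring. field. auto.
Qed.

(* Partial fraction coefficients: if order_cond a = 0, then
   psi_a(y) = B0 + B1 w^-1 + B2 w^-2 + B3 w^-3 + B4 w^-4 with w = 1 - a y. *)
Definition B0 (a : R) : R := 388/3 - 1220*a + 2880*a^2 - 1520*a^3.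
Definition B1 (a : R) : R := -1940/3 + 6100*a - 14400*a^2 + 7600*a^3.
Definition B2 (a : R) : R := 1230 - 11580*a + 27300*a^2 - 14400*a^3.
Definition B3 (a : R) : R := -3160/3 + 9860*a - 23160*a^2 + 12200*a^3.
Definition B4 (a : R) : R := 1025/3 - 3160*a + 7380*a^2 - 3880*a^3.

Definition psi_deriv (a : R) (k : nat) (y : R) : R :=
  match k with O => B0 a | S _ => 0 end
  + B1 a * inv_pow_deriv a 1 k y + B2 a * inv_pow_deriv a 2 k y
  + B3 a * inv_pow_deriv a 3 k y + B4 a * inv_pow_deriv a 4 k y.

Lemma psi_deriv_step a k y : 1 - a*y <> 0 ->
  derivable_pt_lim (psi_deriv a k) y (psi_deriv a (S k) y).
Proof.
  intros Hw.
  apply derivable_pt_lim_eq_value with (0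
    + B1 a * inv_pow_deriv a 1 (S k) y + B2 a * inv_pow_deriv a 2 (S k) y
    + B3 a * inv_pow_deriv a 3 (S k) y + B4 a * inv_pow_deriv a 4 (S k) y);
    [|unfold psi_deriv; ring].
  repeat apply (derivable_pt_lim_plus (fun y => _) (fun y => _)).
  - apply derivable_pt_lim_const.
  - all: apply (derivable_pt_lim_scal (inv_pow_deriv a _ k)), inv_pow_deriv_step, Hw.
Qed.

Lemma rising_step x k : x * rising (x + 1) k = rising x k * (x + INR k).
Proof. rewrite <- rising_shift. reflexivity. Qed.

(* Cubic factor of the derivatives, with K = k + 1 and w = 1 - a y. *)
Definition Tpoly (b1 b2 b3 b4 K w : R) : R :=
  b1 * w^3 + b2 * K * w^2 + b3 * (K*(K+1)/2) * w + b4 * (K*(K+1)*(K+2)/6).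

Lemma psi_deriv_factored a k y : 1 - a*y <> 0 ->
  psi_deriv a k y = match k with O => B0 a | S _ => 0 end
    + a^k * rising 1 k / (1 - a*y)^(k + 4)
      * Tpoly (B1 a) (B2 a) (B3 a) (B4 a) (INR k + 1) (1 - a*y).
Proof.
  intros Hw.
  assert (E2 : rising (INR 2) k = rising 1 k * (1 + INR k)).
  { rewrite <- rising_step. replace (INR 2) with (1 + 1) by (simpl; ring). ring. }
  assert (E3 : rising (INR 3) k = rising (INR 2) k * (2 + INR k) / 2).
  { replace (INR 3) with (2 + 1) by (simpl; ring). replace (INR 2) with 2 by (simpl; ring).
    rewrite <- rising_step. field. }
  assert (E4 : rising (INR 4) k = rising (INR 3) k * (3 + INR k) / 3).
  { replace (INR 4) with (3 + 1) by (simpl; ring). replace (INR 3) with 3 by (simpl; ring).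
    rewrite <- rising_step. field. }
  assert (Hwk : (1 - a*y) ^ k <> 0) by (apply pow_nonzero; auto).
  unfold psi_deriv, inv_pow_deriv, Tpoly. rewrite E4, E3, E2, !pow_add.
  replace (INR 1) with 1 by reflexivity. field. auto.
Qed.

Lemma psi_deriv_0 a y : order_cond a = 0 -> 1 - a*y <> 0 ->
  psi_deriv a 0 y = poly_eval (num_coef a) 4 y / (1 - a*y)^4.
Proof.
  intros HQ Hw. set (w := 1 - a*y) in *.
  assert (E : poly_eval (num_coef a) 4 y =
    B0 a * w^4 + B1 a * w^3 + B2 a * w^2 + B3 a * w + B4 a + order_cond a *
    (y + 1/2*y^2 + 1/6*y^3 + 1/24*y^4 + 6*a*y^2 + 4/3*a*y^3 + 1/6*a*y^4
     + 38/3*a^2*y^3 + 4/3*a^2*y^4 + 38/3*a^3*y^4)).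
  { rewrite poly_eval4. unfold w, num_coef, e1, e2, e3, e4, B0, B1, B2, B3, B4, order_cond.
    field. }
  rewrite E, HQ. unfold psi_deriv, inv_pow_deriv. simpl. fold w. field. auto.
Qed.

(* Numerator of the first derivative. *)
Definition dnum (a x : R) : R :=
  1 + (1 - 5*a)*x + (1/2 - 5*a + 10*a^2)*x^2 + (1/6 - 5/2*a + 10*a^2 - 10*a^3)*x^3.

Lemma psi_deriv_1 a y : order_cond a = 0 -> 1 - a*y <> 0 ->
  psi_deriv a 1 y = dnum a y / (1 - a*y)^5.
Proof.
  intros HQ Hw. set (w := 1 - a*y) in *.
  assert (E : a * (B1 a * w^3 + 2 * B2 a * w^2 + 3 * B3 a * w + 4 * B4 a) =
    dnum a y - order_cond a *
    (1 + y + 1/2*y^2 + 1/6*y^3 + 15*a*y + 5*a*y^2 + 5/6*a*y^3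
     + 50*a^2*y^2 + 20/3*a^2*y^3 + 190/3*a^3*y^3)).
  { unfold w, dnum, B1, B2, B3, B4, order_cond. field. }
  rewrite HQ, Rmult_0_l, Rminus_0_r in E. rewrite <- E.
  unfold psi_deriv, inv_pow_deriv. simpl. fold w. field. auto.
Qed.

Lemma derivable_pt_lim_local f g y l eps : 0 < eps ->
  (forall z, Rabs (z - y) < eps -> f z = g z) ->
  derivable_pt_lim f y l -> derivable_pt_lim g y l.
Proof.
  intros He Hfg Hd e He'. destruct (Hd e He') as [d Hd'].
  assert (Hm : 0 < Rmin d eps) by (apply Rmin_pos; [apply cond_pos | auto]).
  exists (mkposreal _ Hm). intros h hne hlt. simpl in hlt.
  rewrite <- (Hfg (y+h)), <- (Hfg y).
  - apply Hd'; auto. eapply Rlt_le_trans; [apply hlt | apply Rmin_l].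
  - replace (y - y) with 0 by ring. rewrite Rabs_R0. auto.
  - replace (y + h - y) with h by ring. eapply Rlt_le_trans; [apply hlt | apply Rmin_r].
Qed.

Lemma derivative_chain_unique (F G : nat -> R -> R) x d : 0 < d ->
  (forall y, Rabs (y - x) < d -> F 0%nat y = G 0%nat y) ->
  (forall k y, Rabs (y - x) < d -> derivable_pt_lim (F k) y (F (S k) y)) ->
  (forall k y, Rabs (y - x) < d -> derivable_pt_lim (G k) y (G (S k) y)) ->
  forall k y, Rabs (y - x) < d -> F k y = G k y.
Proof.
  intros Hd H0 HF HG k. induction k as [|k IH]; intros y Hy; auto.
  assert (He : 0 < d - Rabs (y - x)) by lra.
  assert (D : derivable_pt_lim (G k) y (F (S k) y)).
  { apply (derivable_pt_lim_local (F k) _ y _ _ He); [|apply HF; auto].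
    intros z Hz. apply IH.
    replace (z - x) with ((z - y) + (y - x)) by ring.
    eapply Rle_lt_trans; [apply Rabs_triang|]. lra. }
  eapply uniqueness_limite; [apply D | apply HG; auto].
Qed.

Lemma abs_mono_on_ext N N' Dn r : (forall y, N y = N' y) ->
  abs_mono_on N Dn r -> abs_mono_on N' Dn r.
Proof.
  intros HN Ham x Hx. destruct (Ham x Hx) as [d [Hd [F [H0 HF]]]].
  exists d. split; [exact Hd|]. exists F. split; [|exact HF].
  intros y Hy Hdn. rewrite <- HN. auto.
Qed.

Lemma denominator_positive_near a x y : 0 < 1 - a*x ->
  Rabs (y - x) < (1 - a*x) / (2 * (Rabs a + 1)) -> (1 - a*x) / 2 < 1 - a*y.
Proof.
  intros Hw Hy. pose proof (Rabs_pos a).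
  assert (Rabs a * Rabs (y - x) < (1 - a*x) / 2).
  { apply Rle_lt_trans with ((Rabs a + 1) * Rabs (y - x));
      [apply Rmult_le_compat_r; [apply Rabs_pos | lra]|].
    apply Rlt_le_trans with ((Rabs a + 1) * ((1 - a*x) / (2 * (Rabs a + 1))));
      [apply Rmult_lt_compat_l; lra | right; field; lra]. }
  rewrite <- Rabs_mult in H0. apply Rabs_def2 in H0. lra.
Qed.

Lemma abs_mono_at_iff a x : order_cond a = 0 -> 0 < 1 - a*x ->
  abs_mono_at (poly_eval (num_coef a) 4) (fun z => (1 - a*z)^4) x <->
  forall k, 0 <= psi_deriv a k x.
Proof.
  intros HQ Hw. pose proof (Rabs_pos a).
  set (r := (1 - a*x) / (2 * (Rabs a + 1))).
  assert (Hr : 0 < r) by (apply Rdiv_lt_0_compat; lra).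
  assert (Hball : forall y, Rabs (y - x) < r -> 1 - a*y <> 0)
    by (intros y Hy; pose proof (denominator_positive_near a x y Hw Hy); lra).
  split.
  - intros [d [Hd [F [H0 [HD Hpos]]]]] k.
    assert (Hd' : 0 < Rmin d r) by (apply Rmin_pos; lra).
    assert (Hin : forall y, Rabs (y - x) < Rmin d r -> Rabs (y - x) < d /\ 1 - a*y <> 0).
    { intros y Hy. split; [eapply Rlt_le_trans; [apply Hy | apply Rmin_l]|].
      apply Hball. eapply Rlt_le_trans; [apply Hy | apply Rmin_r]. }
    rewrite <- (derivative_chain_unique F (psi_deriv a) x _ Hd').
    + apply Hpos.
    + intros y Hy. destruct (Hin y Hy). rewrite H0, psi_deriv_0; auto. apply pow_nonzero; auto.
    + intros j y Hy. apply HD, Hin, Hy.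
    + intros j y Hy. apply psi_deriv_step, Hin, Hy.
    + replace (x - x) with 0 by ring. rewrite Rabs_R0. exact Hd'.
  - intros Hk. exists r. split; [exact Hr|]. exists (psi_deriv a).
    split; [|split; [|exact Hk]].
    + intros y Hy _. apply psi_deriv_0; auto.
    + intros k y Hy. apply psi_deriv_step; auto.
Qed.

(** * Numerical facts *)

(* Isolating intervals [l_i, u_i] for the four roots of order_cond. *)
Definition l1 : Q := 228229333663 # 2500000000000.
Definition u1 : Q := 912917334653 # 10000000000000.
Definition l2 : Q := 1744841 # 10000000.
Definition u2 : Q := 872421 # 5000000.
Definition l3 : Q := 60759 # 156250.
Definition u3 : Q := 3888577 # 10000000.
Definition l4 : Q := 420427 # 312500.
Definition u4 : Q := 2690733 # 2000000.

(* An isolating interval [xL, xR] for the relevant root of q12. *)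
Definition xL : Q := -37432993 # 10000000.
Definition xR : Q := -1169781 # 312500.

(* Range of w = 1 - a x for a in I1 and x in [xL, 0]. *)
Definition wmax : Q := 1 - u1 * xL.

Lemma interval_layout :
  0 < Q2R l1 /\ Q2R l1 < Q2R u1 /\ Q2R u1 < Q2R l2 /\ Q2R l2 < Q2R u2 /\
  Q2R u2 < Q2R l3 /\ Q2R l3 < Q2R u3 /\ Q2R u3 < Q2R l4 /\ Q2R l4 < Q2R u4 /\
  Q2R xL < Q2R xR /\ Q2R xR < -1.
Proof. unfold l1, u1, l2, u2, l3, u3, l4, u4, xL, xR. cbv [Q2R Qnum Qden]. lra. Qed.

Lemma order_cond_signs a :
  (a <= Q2R l1 -> 0 < order_cond a) /\
  (Q2R u1 <= a <= Q2R l2 -> order_cond a < 0) /\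
  (Q2R u2 <= a <= Q2R l3 -> 0 < order_cond a) /\
  (Q2R u3 <= a <= Q2R l4 -> order_cond a < 0) /\
  (Q2R u4 <= a -> 0 < order_cond a).
Proof.
  repeat split; intro Ha; try (enough (0 < - order_cond a) by lra); unfold order_cond.
  - certify_upto [1; -20; 120; -240; 120]%Q l1 a. exact Ha.
  - certify [-1; 20; -120; 240; -120]%Q u1 l2 7%nat a. exact Ha.
  - certify [1; -20; 120; -240; 120]%Q u2 l3 5%nat a. exact Ha.
  - certify [-1; 20; -120; 240; -120]%Q u3 l4 0%nat a. exact Ha.
  - certify_from [1; -20; 120; -240; 120]%Q u4 a. exact Ha.
Qed.

Lemma order_cond_roots a : order_cond a = 0 ->
  Q2R l1 <= a <= Q2R u1 \/ Q2R l2 <= a <= Q2R u2 \/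
  Q2R l3 <= a <= Q2R u3 \/ Q2R l4 <= a <= Q2R u4.
Proof.
  intros HQ. destruct (order_cond_signs a) as [S0 [S1 [S2 [S3 S4]]]].
  pose proof interval_layout.
  destruct (Rle_dec a (Q2R l1)); [specialize (S0 r); lra|].
  destruct (Rle_dec a (Q2R u1)); [lra|].
  destruct (Rle_dec a (Q2R l2)); [specialize (S1 ltac:(lra)); lra|].
  destruct (Rle_dec a (Q2R u2)); [lra|].
  destruct (Rle_dec a (Q2R l3)); [specialize (S2 ltac:(lra)); lra|].
  destruct (Rle_dec a (Q2R u3)); [lra|].
  destruct (Rle_dec a (Q2R l4)); [specialize (S3 ltac:(lra)); lra|].
  destruct (Rle_dec a (Q2R u4)); [lra|].
  specialize (S4 ltac:(lra)). lra.
Qed.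

Lemma order_cond_root_I1 : exists a, Q2R l1 <= a <= Q2R u1 /\ order_cond a = 0.
Proof.
  destruct (order_cond_signs (Q2R l1)) as [S0 _].
  destruct (order_cond_signs (Q2R u1)) as [_ [S1 _]].
  pose proof interval_layout.
  assert (Hc : continuity (fun z => - order_cond z)) by (unfold order_cond; reg).
  destruct (IVT _ (Q2R l1) (Q2R u1) Hc) as [a [Ha HQ]];
    [lra | specialize (S0 ltac:(lra)); lra | specialize (S1 ltac:(lra)); lra|].
  exists a. split; [exact Ha | lra].
Qed.

Definition lo0 : R := 20401689/500000.
Definition lo1 : R := -204016897/1000000.
Definition lo2 : R := 389408733/1000000.
Definition lo3 : R := -84233549/250000.
Definition lo4 : R := 55869487/500000.

Lemma B_lower_bounds a : Q2R l1 <= a <= Q2R u1 ->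
  lo0 < B0 a /\ lo1 < B1 a /\ lo2 < B2 a /\ lo3 < B3 a /\ lo4 < B4 a.
Proof.
  intros Ha. repeat split; apply Rlt_0_minus;
    unfold B0, B1, B2, B3, B4, lo0, lo1, lo2, lo3, lo4.
  - certify [132794933 # 1500000; -1220; 2880; -1520]%Q l1 u1 0%nat a. exact Ha.
  - certify [-1327949309 # 3000000; 6100; -14400; 7600]%Q l1 u1 0%nat a. exact Ha.
  - certify [840591267 # 1000000; -11580; 27300; -14400]%Q l1 u1 0%nat a. exact Ha.
  - certify [-537299353 # 750000; 9860; -23160; 12200]%Q l1 u1 0%nat a. exact Ha.
  - certify [344891539 # 1500000; -3160; 7380; -3880]%Q l1 u1 0%nat a. exact Ha.
Qed.

(* For a in I1, dnum a is a strictly increasing cubic: its leading coefficient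
   and the discriminant of its derivative have the right signs. *)
Lemma dnum_increasing a x y : Q2R l1 <= a <= Q2R u1 -> x < y -> dnum a x < dnum a y.
Proof.
  intros Ha Hxy.
  set (h1 := 1 - 5*a). set (h2 := 1/2 - 5*a + 10*a^2).
  set (h3 := 1/6 - 5/2*a + 10*a^2 - 10*a^3).
  assert (H3 : 0 < h3) by (unfold h3; certify [1 # 6; -5 # 2; 10; -10]%Q l1 u1 0%nat a; exact Ha).
  assert (HD : 0 < 3*h1*h3 - h2^2)
    by (unfold h1, h2, h3; certify [1 # 4; -5; 65 # 2; -80; 50]%Q l1 u1 0%nat a; exact Ha).
  assert (E : dnum a y - dnum a x = (y - x) * (h1 + h2*(x+y) + h3*(x^2+x*y+y^2)))
    by (unfold dnum, h1, h2, h3; field).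
  set (s := x + y).
  (* the quadratic factor is at least h1 + h2 s + 3/4 h3 s^2, which is positive *)
  assert (G1 : h1 + h2*s + 3/4*h3*s^2 <= h1 + h2*(x+y) + h3*(x^2+x*y+y^2)).
  { assert (0 <= h3 * ((x-y)^2/4)) by (apply Rmult_le_pos; [lra | unfold Rdiv; apply Rmult_le_pos; [apply pow2_ge_0 | lra]]).
    replace (h3*(x^2+x*y+y^2)) with (3/4*h3*s^2 + h3*((x-y)^2/4)) by (unfold s; field).
    unfold s; lra. }
  assert (G2 : 0 < h1 + h2*s + 3/4*h3*s^2).
  { assert (0 < 3*h3*(h1 + h2*s + 3/4*h3*s^2)).
    { replace (3*h3*(h1 + h2*s + 3/4*h3*s^2)) with ((3/2*h3*s + h2)^2 + (3*h1*h3 - h2^2)) by field.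
      pose proof (pow2_ge_0 (3/2*h3*s + h2)). lra. }
    nra. }
  nra.
Qed.

Lemma dnum_endpoint_signs a : Q2R l1 <= a <= Q2R u1 ->
  dnum a (Q2R xL) < 0 /\ 0 < dnum a (Q2R xR).
Proof.
  intros Ha. split; [enough (0 < - dnum a (Q2R xL)) by lra|];
    unfold dnum, xL, xR; cbv [Q2R Qnum Qden].
  - certify [26875120887781763650657 # 6000000000000000000000;
      -31914213337162253650657 # 400000000000000000000;
      38439904386542743650657 # 100000000000000000000;
      -52452194035923233650657 # 100000000000000000000]%Q l1 u1 0%nat a. exact Ha.
  - certify [-273387841085556347 # 61035156250000000;
      973944410119481541 # 12207031250000000;
      -1173092679794794041 # 3051757812500000;
      1600713801032606541 # 3051757812500000]%Q l1 u1 0%nat a. exact Ha.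
Qed.

Lemma dnum_root a : Q2R l1 <= a <= Q2R u1 ->
  exists x, Q2R xL <= x <= Q2R xR /\ dnum a x = 0.
Proof.
  intros Ha. destruct (dnum_endpoint_signs a Ha) as [HL HR].
  assert (Hc : continuity (dnum a)) by (unfold dnum; reg).
  destruct (IVT (dnum a) (Q2R xL) (Q2R xR) Hc) as [x Hx]; [pose proof interval_layout; lra | exact HL | exact HR |].
  exists x. exact Hx.
Qed.

(* Elimination of a: q12 lies in the ideal generated by order_cond a and dnum a x,
   with the explicit cofactors below. *)
Definition elim_cof_dnum (a x : R) : R :=
  1 - 7*x + 39/2*x^2 - 79/3*x^3 + 29/2*x^4 + 11/12*x^5 - 289/72*x^6 - 5/36*x^7
  + 71/144*x^8 + 7/72*x^9
  + a*(5*x - 35*x^2 + 195/2*x^3 - 120*x^4 + 35*x^5 + 455/12*x^6 - 265/72*x^7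
       - 55/9*x^8 - 155/144*x^9)
  + a^2*(15*x^2 - 105*x^3 + 445/2*x^4 - 275/2*x^5 - 355/4*x^6 + 175/12*x^7
         + 385/24*x^8 + 65/24*x^9)
  + a^3*(35*x^3 - 105*x^4 + 165/2*x^5 + 140/3*x^6 - 35/4*x^7 - 35/4*x^8 - 35/24*x^9).

Definition elim_cof_order (a x : R) : R :=
  - 5/8*x^4 + 5/3*x^5 - 25/24*x^6 - 25/36*x^7 - 5/4*x^8 - 5/36*x^9 + 265/864*x^10
  + 55/432*x^11 + 55/3456*x^12
  + a*(5/3*x^5 - 35/12*x^6 - 35/12*x^7 + 305/36*x^8 + 25/9*x^9 - 175/144*x^10
       - 35/48*x^11 - 5/48*x^12)
  + a^2*(- 35/12*x^6 + 35/4*x^7 - 55/8*x^8 - 35/9*x^9 + 35/48*x^10 + 35/48*x^11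
         + 35/288*x^12).

Lemma q12_elimination a x : order_cond a = 0 -> dnum a x = 0 -> q12 x = 0.
Proof.
  intros HQ HD.
  assert (E : q12 x = 3456 * (elim_cof_dnum a x * dnum a x - elim_cof_order a x * order_cond a))
    by (unfold q12, elim_cof_dnum, elim_cof_order, dnum, order_cond; field).
  rewrite E, HQ, HD. ring.
Qed.

Lemma q12_pos_below x : x <= Q2R xL -> 0 < q12 x.
Proof.
  intros Hx. unfold q12.
  certify_upto [3456; -20736; 44928; -35136; -9072; 13248; 2784; -2016; -864; -32; 48; 12; 1]%Q xL x.
  exact Hx.
Qed.

Lemma q12_decreasing x y : Q2R xL <= x -> x < y -> y <= Q2R xR -> q12 y < q12 x.
Proof.
  intros Hx Hxy Hy.
  set (dq := fun t => -20736 + 89856*t - 105408*t^2 - 36288*t^3 + 66240*t^4 + 16704*t^5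
                      - 14112*t^6 - 6912*t^7 - 288*t^8 + 480*t^9 + 132*t^10 + 12*t^11).
  assert (Hd : forall t, derivable_pt_lim q12 t (dq t))
    by (intro t; apply is_derive_Reals; unfold q12, dq; auto_derive; auto; ring).
  assert (Hneg : forall t, Q2R xL <= t <= Q2R xR -> 0 < - dq t).
  { intros t Ht. unfold dq.
    certify [20736; -89856; 105408; 36288; -66240; -16704; 14112; 6912; 288; -480; -132; -12]%Q
      xL xR 0%nat t. exact Ht. }
  destruct (MVT_cor2 q12 dq x y Hxy (fun c _ => Hd c)) as [c [Hc1 Hc2]].
  specialize (Hneg c ltac:(lra)). nra.
Qed.

Lemma wmax_value : Q2R wmax = 1 - Q2R u1 * Q2R xL.
Proof. unfold wmax. rewrite Q2R_minus, Q2R_mult, RMicromega.Q2R_1. reflexivity. Qed.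

Lemma Tpoly_lo_pos w : 1 <= w <= Q2R wmax ->
  0 < lo0 * w^4 + Tpoly lo1 lo2 lo3 lo4 1 w /\
  0 < Tpoly lo1 lo2 lo3 lo4 3 w /\
  forall s, 0 <= s -> 0 < Tpoly lo1 lo2 lo3 lo4 (4 + s) w.
Proof.
  intros Hw.
  assert (Hw' : Q2R 1 <= w <= Q2R wmax) by (rewrite RMicromega.Q2R_1; exact Hw).
  unfold Tpoly, lo0, lo1, lo2, lo3, lo4. split; [|split].
  - certify [55869487 # 500000; -84233549 # 250000; 389408733 # 1000000;
      -204016897 # 1000000; 20401689 # 500000]%Q 1%Q wmax 2%nat w. exact Hw'.
  - certify [55869487 # 50000; -252700647 # 125000; 1168226199 # 1000000;
      -204016897 # 1000000]%Q 1%Q wmax 1%nat w. exact Hw'.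
  - intros s Hs.
    (* as a polynomial in s, all coefficients are positive *)
    assert (A0 : 0 < 55869487/25000 - 84233549/25000*w + 389408733/250000*w^2
                     - 204016897/1000000*w^3)
      by (certify [55869487 # 25000; -84233549 # 25000; 389408733 # 250000;
            -204016897 # 1000000]%Q 1%Q wmax 1%nat w; exact Hw').
    assert (A1 : 0 < 2067171019/1500000 - 758101941/500000*w + 389408733/1000000*w^2)
      by (certify [2067171019 # 1500000; -758101941 # 500000; 389408733 # 1000000]%Q
            1%Q wmax 1%nat w; exact Hw').
    assert (A2 : 0 < 55869487/200000 - 84233549/500000*w)
      by (certify [55869487 # 200000; -84233549 # 500000]%Q 1%Q wmax 0%nat w; exact Hw').
    match goal with |- 0 < ?e => replace e with
      ((55869487/25000 - 84233549/25000*w + 389408733/250000*w^2 - 204016897/1000000*w^3)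
       + (2067171019/1500000 - 758101941/500000*w + 389408733/1000000*w^2) * s
       + (55869487/200000 - 84233549/500000*w) * s^2 + 55869487/3000000 * s^3) by field end.
    assert (0 <= s^2) by (apply pow_le; lra). assert (0 <= s^3) by (apply pow_le; lra).
    assert (0 <= (2067171019/1500000 - 758101941/500000*w + 389408733/1000000*w^2) * s)
      by (apply Rmult_le_pos; lra).
    assert (0 <= (55869487/200000 - 84233549/500000*w) * s^2) by (apply Rmult_le_pos; lra).
    lra.
Qed.

(* Negativity of the cubic factor of the 9th derivative (K = 10): at w = 1 for
   a in I2 or I4, and at w = 1 + a (i.e. x = -1) for a in I3. *)
Lemma Tpoly_K10_neg a :
  (Q2R l2 <= a <= Q2R u2 \/ Q2R l4 <= a <= Q2R u4 -> Tpoly (B1 a) (B2 a) (B3 a) (B4 a) 10 1 < 0) /\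
  (Q2R l3 <= a <= Q2R u3 -> Tpoly (B1 a) (B2 a) (B3 a) (B4 a) 10 (1 + a) < 0).
Proof.
  split; [intros [Ha|Ha] | intros Ha];
    match goal with |- ?e < 0 => enough (0 < - e) by lra end;
    unfold Tpoly, B1, B2, B3, B4.
  - certify [-86660 # 3; 262600; -608400; 319000]%Q l2 u2 0%nat a. exact Ha.
  - certify [-86660 # 3; 262600; -608400; 319000]%Q l4 u4 0%nat a. exact Ha.
  - certify [-86660 # 3; 893620 # 3; -947760; 3564440 # 3; -641700; 135600; -7600]%Q
      l3 u3 0%nat a. exact Ha.
Qed.

(** * The radius of absolute monotonicity of each element *)

Lemma Tpoly_monotone b1 b2 b3 b4 c1 c2 c3 c4 K w : 0 <= K -> 0 <= w ->
  c1 <= b1 -> c2 <= b2 -> c3 <= b3 -> c4 <= b4 ->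
  Tpoly c1 c2 c3 c4 K w <= Tpoly b1 b2 b3 b4 K w.
Proof.
  intros HK Hw H1 H2 H3 H4. unfold Tpoly.
  assert (0 <= w^2) by (apply pow_le; lra). assert (0 <= w^3) by (apply pow_le; lra).
  assert (0 <= K * w^2) by (apply Rmult_le_pos; lra).
  assert (0 <= K * (K + 1) / 2 * w) by (apply Rmult_le_pos; [|lra]; unfold Rdiv;
    apply Rmult_le_pos; [apply Rmult_le_pos|]; lra).
  assert (0 <= K * (K + 1) * (K + 2) / 6) by (unfold Rdiv;
    apply Rmult_le_pos; [repeat apply Rmult_le_pos|]; lra).
  assert ((b1 - c1) * w^3 >= 0) by (apply Rle_ge, Rmult_le_pos; lra).
  assert ((b2 - c2) * (K * w^2) >= 0) by (apply Rle_ge, Rmult_le_pos; lra).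
  assert ((b3 - c3) * (K * (K + 1) / 2 * w) >= 0) by (apply Rle_ge, Rmult_le_pos; lra).
  assert ((b4 - c4) * (K * (K + 1) * (K + 2) / 6) >= 0) by (apply Rle_ge, Rmult_le_pos; lra).
  nra.
Qed.

Lemma positive_factor a k w : 0 < a -> 0 < w -> 0 < a^k * rising 1 k / w^(k+4).
Proof.
  intros Ha Hw. unfold Rdiv. repeat apply Rmult_lt_0_compat.
  - apply pow_lt, Ha.
  - apply rising_pos. lra.
  - apply Rinv_0_lt_compat, pow_lt, Hw.
Qed.

Lemma w_range_I1 a x : Q2R l1 <= a <= Q2R u1 -> Q2R xL <= x <= 0 ->
  1 <= 1 - a*x <= Q2R wmax.
Proof.
  intros Ha Hx. rewrite wmax_value. assert (0 < Q2R l1) by (pose proof interval_layout; lra).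
  assert (a * (- x) <= Q2R u1 * (- Q2R xL)) by (apply Rmult_le_compat; lra).
  split; nra.
Qed.

(* For a in I1 and w = 1 - a x in [1, wmax], every derivative of order k <> 1
   is nonnegative (this does not even need order_cond a = 0). *)
Lemma psi_deriv_nonneg_I1 a x k : Q2R l1 <= a <= Q2R u1 -> 1 <= 1 - a*x <= Q2R wmax ->
  k <> 1%nat -> 0 <= psi_deriv a k x.
Proof.
  intros Ha Hw Hk. assert (Hpos : 0 < a) by (pose proof interval_layout; lra).
  destruct (B_lower_bounds a Ha) as [L0 [L1 [L2 [L3 L4]]]].
  destruct (Tpoly_lo_pos _ Hw) as [P1 [P3 P4]].
  rewrite psi_deriv_factored by lra. set (w := 1 - a*x) in *.
  assert (Hmono : forall K, 0 <= K ->
            Tpoly lo1 lo2 lo3 lo4 K w <= Tpoly (B1 a) (B2 a) (B3 a) (B4 a) K w)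
    by (intros; apply Tpoly_monotone; lra).
  destruct k as [|[|[|k]]]; [| congruence | |].
  - replace (INR 0 + 1) with 1 by (simpl; ring).
    match goal with |- 0 <= ?e => replace e with
      ((B0 a * w^4 + Tpoly (B1 a) (B2 a) (B3 a) (B4 a) 1 w) / w^4) by (simpl; field; lra) end.
    assert (lo0 * w^4 <= B0 a * w^4) by (apply Rmult_le_compat_r; [apply pow_le|]; lra).
    specialize (Hmono 1 ltac:(lra)).
    apply Rdiv_le_0_compat; [lra | apply pow_lt; lra].
  - rewrite Rplus_0_l. replace (INR 2 + 1) with 3 by (simpl; ring).
    apply Rmult_le_pos; [left; apply positive_factor; lra|].
    specialize (Hmono 3 ltac:(lra)). lra.
  - rewrite Rplus_0_l. replace (INR (S (S (S k))) + 1) with (4 + INR k) by (rewrite !S_INR; ring).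
    pose proof (pos_INR k).
    apply Rmult_le_pos; [left; apply positive_factor; lra|].
    specialize (Hmono (4 + INR k) ltac:(lra)). specialize (P4 (INR k) ltac:(lra)). lra.
Qed.

Lemma radius_I1_attained a x1 : Q2R l1 <= a <= Q2R u1 -> order_cond a = 0 ->
  Q2R xL <= x1 <= Q2R xR -> dnum a x1 = 0 ->
  abs_mono_on (poly_eval (num_coef a) 4) (fun z => (1 - a*z)^4) (- x1).
Proof.
  intros Ha HQ Hx1 Hd x Hx.
  assert (Hw := w_range_I1 a x Ha ltac:(lra)).
  apply abs_mono_at_iff; [exact HQ | lra |]. intro k.
  destruct (Nat.eq_dec k 1) as [->|Hk]; [|apply psi_deriv_nonneg_I1; auto].
  rewrite psi_deriv_1 by (auto; lra).
  assert (0 <= dnum a x).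
  { destruct (Req_dec x x1) as [->|]; [lra|]. rewrite <- Hd. left. apply dnum_increasing; lra. }
  apply Rdiv_le_0_compat; [lra | apply pow_lt; lra].
Qed.

(* ... and on no larger interval, since psi_a' < 0 to the left of x1. *)
Lemma radius_I1_bound a x1 r : Q2R l1 <= a <= Q2R u1 -> order_cond a = 0 ->
  Q2R xL <= x1 <= Q2R xR -> dnum a x1 = 0 ->
  abs_mono_on (poly_eval (num_coef a) 4) (fun z => (1 - a*z)^4) r -> r <= - x1.
Proof.
  intros Ha HQ Hx1 Hd Ham. destruct (Rle_dec r (- x1)) as [|Hr]; auto. exfalso.
  assert (HxR : Q2R xR < 0) by (pose proof interval_layout; lra).
  assert (HxL : Q2R xL < x1).
  { destruct (Req_dec x1 (Q2R xL)) as [E|]; [|lra].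
    pose proof (proj1 (dnum_endpoint_signs a Ha)). rewrite <- E in H. lra. }
  set (x0 := Rmax (- r) (Q2R xL)).
  assert (Hx0 : - r <= x0 <= 0 /\ Q2R xL <= x0 < x1)
    by (unfold x0, Rmax; destruct (Rle_dec (- r) (Q2R xL)); lra).
  assert (Hw := w_range_I1 a x0 Ha ltac:(lra)).
  assert (Hneg : dnum a x0 < 0) by (rewrite <- Hd; apply dnum_increasing; lra).
  pose proof (proj1 (abs_mono_at_iff a x0 HQ ltac:(lra)) (Ham x0 ltac:(lra)) 1%nat) as H1.
  rewrite psi_deriv_1 in H1 by (auto; lra).
  assert (0 < / (1 - a*x0)^5) by (apply Rinv_0_lt_compat, pow_lt; lra).
  unfold Rdiv in H1. nra.
Qed.

(* For the other three roots, absolute monotonicity already fails at 0 or -1. *)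
Lemma radius_other a r : order_cond a = 0 ->
  Q2R l2 <= a <= Q2R u2 \/ Q2R l3 <= a <= Q2R u3 \/ Q2R l4 <= a <= Q2R u4 ->
  abs_mono_on (poly_eval (num_coef a) 4) (fun z => (1 - a*z)^4) r -> r < 1.
Proof.
  intros HQ Ha Ham. destruct (Rlt_dec r 1) as [|Hr]; auto. exfalso.
  assert (Hpos : 0 < a) by (pose proof interval_layout; lra).
  destruct (Tpoly_K10_neg a) as [N24 N3].
  assert (Hk9 : forall x, 0 < 1 - a*x -> psi_deriv a 9 x =
            a^9 * rising 1 9 / (1 - a*x)^(9+4) * Tpoly (B1 a) (B2 a) (B3 a) (B4 a) 10 (1 - a*x)).
  { intros x Hx. rewrite psi_deriv_factored by lra.
    replace (INR 9 + 1) with 10 by (simpl; ring). ring. }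
  destruct Ha as [Ha|[Ha|Ha]]; [set (x := 0) | set (x := -1) | set (x := 0)];
    assert (Hw : 0 < 1 - a*x) by (unfold x; lra);
    pose proof (proj1 (abs_mono_at_iff a x HQ Hw) (Ham x ltac:(unfold x; lra)) 9%nat) as H9;
    rewrite Hk9 in H9 by exact Hw;
    pose proof (positive_factor a 9 _ Hpos Hw);
    unfold x in *; replace (1 - a*0) with 1 in * by ring; replace (1 - a*(-1)) with (1 + a) in * by ring.
  - specialize (N24 (or_introl Ha)). nra.
  - specialize (N3 Ha). nra.
  - specialize (N24 (or_intror Ha)). nra.
Qed.

(** * The value of \hat R_{4/4,5} *)

Lemma q12_root_unique x y : Q2R xL <= x <= Q2R xR -> Q2R xL <= y <= Q2R xR ->
  q12 x = 0 -> q12 y = 0 -> x = y.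
Proof.
  intros Hx Hy Hqx Hqy. destruct (Rtotal_order x y) as [h|[h|h]]; auto.
  - pose proof (q12_decreasing x y ltac:(lra) h ltac:(lra)). lra.
  - pose proof (q12_decreasing y x ltac:(lra) h ltac:(lra)). lra.
Qed.

Lemma q12_least_root xs : Q2R xL <= xs <= Q2R xR -> q12 xs = 0 ->
  forall y, q12 y = 0 -> xs <= y.
Proof.
  intros Hxs Hq y Hy. destruct (Rle_dec xs y) as [|h]; auto. exfalso.
  destruct (Rle_dec y (Q2R xL)).
  - pose proof (q12_pos_below y ltac:(lra)). lra.
  - pose proof (q12_decreasing y xs ltac:(lra) ltac:(lra) ltac:(lra)). lra.
Qed.

Lemma Rhat_upper_bound xs : Q2R xL <= xs <= Q2R xR -> q12 xs = 0 ->
  forall r, Rhat_set 4 5 r -> r <= - xs.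
Proof.
  intros Hxs Hq r [-> | [_ [c [b [Hpi Ham]]]]]; [pose proof interval_layout; lra|].
  destruct (pihat_coeffs c b Hpi) as [HQ Hc].
  apply (abs_mono_on_ext _ (poly_eval (num_coef b) 4)) in Ham; [|exact Hc].
  destruct (order_cond_roots b HQ) as [Hb | Hb].
  - destruct (dnum_root b Hb) as [x1 [Hx1 Hd]].
    replace xs with x1 by (apply q12_root_unique; auto; exact (q12_elimination b x1 HQ Hd)).
    exact (radius_I1_bound b x1 r Hb HQ Hx1 Hd Ham).
  - pose proof (radius_other b r HQ Hb Ham). pose proof interval_layout. lra.
Qed.

Theorem mainTheorem19 :
  exists xs : R,
    q12 xs = 0 /\ (forall y : R, q12 y = 0 -> xs <= y) /\
    is_lub (Rhat_set 4 5) (- xs).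
Proof.
  destruct order_cond_root_I1 as [a [Ha HQ]].
  destruct (dnum_root a Ha) as [xs [Hxs Hd]].
  pose proof (q12_elimination a xs HQ Hd) as Hq.
  exists xs. split; [exact Hq | split; [exact (q12_least_root xs Hxs Hq) | split]].
  - exact (Rhat_upper_bound xs Hxs Hq).
  - (* the bound - xs is attained by psi_a for the smallest root a *)
    intros u Hu. apply Hu. right. split; [pose proof interval_layout; lra|].
    exists (num_coef a), a.
    exact (conj (pihat_of_root a HQ) (radius_I1_attained a xs Ha HQ Hxs Hd)).
Qed.
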